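(* BC, MS and FT satisfy partition consistency. VD and MF do not: for each $f\in\{\mathrm{VD},\mathrm{MF}\}$ there exists a profile $P$ for which the equivalence in the definition of partition consistency fails.
   Context: Candidates come from a fixed infinite universe; rules are defined for profiles over every finite candidate set $C$. An approval ballot is a nonempty subset $A\subseteq C$; a profile over $C$ is a finite sequence of ballots. An axis is a strict linear order $\triangleleft$ on $C$; $a\trianglelefteq b$ means $a\triangleleft b$ or $a=b$. A ballot $A$ is an interval of $\triangleleft$ if for all $a,b\in A$ and every $c$ with $a\triangleleft c\triangleleft b$ we have $c\in A$; a set $S\subseteq C$ is an interval of $\triangleleft$ in the same sense. For $C'\subseteq C$, $P_{C'}$ is the profile over $C'$ obtained by intersecting each ballot with $C'$ (ballots becoming empty are discarded), and $\triangleleft_{C'}$ is the restriction of $\triangleleft$ to $C'$. The co-approval partition $C_1,\dots,C_k$ of $P$ is the set of equivalence classes of the equivalence relation on $C$ generated by $x\sim y$ whenever some ballot of $P$ contains both $x$ and $y$ (never-approved candidates form singleton classes). A rule $f$ satisfies partition consistency if for every profile $P$ with co-approval partition $C_1,\dots,C_k$ and every axis $\triangleleft$ on $C$: $\triangleleft\in f(P)$ iff for every $j$, $C_j$ is an interval of $\triangleleft$ and $\triangleleft_{C_j}\in f(P_{C_j})$. For a cost function $\mathrm{cost}_f$, the scoring rule returns $f(P)=\arg\min_{\triangleleft}\sum_{A\in P}\mathrm{cost}_f(A,\triangleleft)$. The five rules are the scoring rules (on every $C$) with costs: $\mathrm{cost}_{\mathrm{VD}}(A,\triangleleft)=0$ if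 $A$ is an interval of $\triangleleft$ and $1$ otherwise; $\mathrm{cost}_{\mathrm{MF}}(A,\triangleleft)=\min_{x,y\in A,\ x\trianglelefteq y}\big(|\{z\in A: z\triangleleft x \text{ or } y\triangleleft z\}|+|\{z\notin A: x\triangleleft z\triangleleft y\}|\big)$; $\mathrm{cost}_{\mathrm{BC}}(A,\triangleleft)=|\{b\notin A: a\triangleleft b\triangleleft c \text{ for some } a,c\in A\}|$; $\mathrm{cost}_{\mathrm{MS}}(A,\triangleleft)=\sum_{x\in C\setminus A}\min\big(|\{y\in A:y\triangleleft x\}|,\,|\{y\in A:x\triangleleft y\}|\big)$; $\mathrm{cost}_{\mathrm{FT}}(A,\triangleleft)=\sum_{x\in C\setminus A}|\{y\in A:y\triangleleft x\}|\cdot|\{y\in A:x\triangleleft y\}|$. *)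

From mathcomp Require Import all_boot.
Set Implicit Arguments. Unset Strict Implicit. Unset Printing Implicit Defensive.

(* Candidates are natural numbers (a fixed infinite universe).
   A finite candidate set is a duplicate-free list C : seq nat (only its
   elements matter).  A ballot is a list of candidates (read as the set of its
   members).  An axis on C is a list ax that is a permutation of C, read from
   left to right: a <| b iff a occurs before b in ax. *)

Definition ballot := seq nat.
Definition profile := seq ballot.

Definition is_ballot (C : seq nat) (A : ballot) : Prop :=
  A != [::] /\ {subset A <= C}.

Definition is_profile (C : seq nat) (P : profile) : Prop :=
  forall A, A \in P -> is_ballot C A.

Definition is_axis (C ax : seq nat) : Prop := perm_eq ax C.

Definition axlt (ax : seq nat) (a b : nat) : bool := index a ax < index b ax.
Definition axle (ax : seq nat) (a b : nat) : bool := index a ax <= index b ax.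

Definition is_interval (ax : seq nat) (S : seq nat) : bool :=
  all (fun a => all (fun b =>
    all (fun c => (axlt ax a c && axlt ax c b) ==> (c \in S)) ax) S) S.

(* cost functions; ax enumerates the whole candidate set C *)
Definition cost_VD (A : ballot) (ax : seq nat) : nat :=
  if is_interval ax A then 0 else 1.

Definition mf_val (A : ballot) (ax : seq nat) (x y : nat) : nat :=
  count (fun z => (z \in A) && (axlt ax z x || axlt ax y z)) ax
  + count (fun z => (z \notin A) && axlt ax x z && axlt ax z y) ax.

(* minimum over pairs x <|= y in A (nonempty since A is nonempty).  The
   default value size ax is an upper bound of every mf_val, so it never
   affects the minimum when A is nonempty. *)
Definition cost_MF (A : ballot) (ax : seq nat) : nat :=
  foldr minn (size ax)
    [seq mf_val A ax x y | x <- A, y <- [seq y <- A | axle ax x y]].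

Definition cost_BC (A : ballot) (ax : seq nat) : nat :=
  count (fun b => (b \notin A) && has (fun a => axlt ax a b) A
                               && has (fun c => axlt ax b c) A) ax.

Definition n_left (A : ballot) (ax : seq nat) (x : nat) : nat :=
  count (fun y => (y \in A) && axlt ax y x) ax.
Definition n_right (A : ballot) (ax : seq nat) (x : nat) : nat :=
  count (fun y => (y \in A) && axlt ax x y) ax.

Definition cost_MS (A : ballot) (ax : seq nat) : nat :=
  \sum_(x <- ax | x \notin A) minn (n_left A ax x) (n_right A ax x).

Definition cost_FT (A : ballot) (ax : seq nat) : nat :=
  \sum_(x <- ax | x \notin A) n_left A ax x * n_right A ax x.

(* a rule: given candidate set C and profile P, the predicate "ax is among the
   selected axes" *)
Definition rule := seq nat -> profile -> seq nat -> Prop.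

Definition total_cost (cost : ballot -> seq nat -> nat) (P : profile) (ax : seq nat) : nat :=
  \sum_(A <- P) cost A ax.

Definition scoring_rule (cost : ballot -> seq nat -> nat) : rule :=
  fun C P ax => is_axis C ax /\
    forall ax', is_axis C ax' -> total_cost cost P ax <= total_cost cost P ax'.

Definition VD : rule := scoring_rule cost_VD.
Definition MF : rule := scoring_rule cost_MF.
Definition BC : rule := scoring_rule cost_BC.
Definition MS : rule := scoring_rule cost_MS.
Definition FT : rule := scoring_rule cost_FT.

(* co-approval equivalence: the equivalence relation generated by
   "x and y are approved together by some ballot of P" *)
Definition coapproved (P : profile) (x y : nat) : bool :=
  has (fun A => (x \in A) && (y \in A)) P.

Inductive coapp_equiv (P : profile) : nat -> nat -> Prop :=
| ce_refl x : coapp_equiv P x x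
| ce_step x y z : coapp_equiv P x y -> coapproved P y z -> coapp_equiv P x z.

Definition is_block (C : seq nat) (P : profile) (S : seq nat) : Prop :=
  uniq S /\ exists2 x, x \in C &
    forall y, y \in S <-> (y \in C /\ coapp_equiv P x y).

Definition restrict (P : profile) (S : seq nat) : profile :=
  [seq [seq x <- A | x \in S] | A <- P & has (fun x => x \in S) A].

Definition pc_equiv (f : rule) (C : seq nat) (P : profile) (ax : seq nat) : Prop :=
  f C P ax <->
  (forall S, is_block C P S ->
     is_interval ax S /\ f S (restrict P S) [seq x <- ax | x \in S]).

Definition partition_consistent (f : rule) : Prop :=
  forall (C : seq nat) (P : profile) (ax : seq nat),
    uniq C -> is_profile C P -> is_axis C ax -> pc_equiv f C P ax.

From mathcomp Require Import all_boot zify.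
From Stdlib Require Import ClassicalEpsilon.
Set Implicit Arguments. Unset Strict Implicit. Unset Printing Implicit Defensive.

(* For BC, MS and FT, restricting the axis to a set S containing a ballot A
   leaves the cost of A unchanged unless some candidate outside S lies between
   two members of A, in which case the cost drops ([separable_cost]).  Summing
   over the ballots, the total cost of an axis is at least the sum of the costs
   of its restrictions to the co-approval blocks, with equality when every block
   is an interval.  Stably sorting an axis by blocks keeps these restrictions
   and makes every block an interval; if some block was not an interval, a
   chain of co-approvals inside it crosses a foreign candidate, so sorting
   strictly improves.  Hence the optimal axes are exactly the concatenations of
   optimal axes of the blocks, in any order.
   VD and MF fail because a ballot split by a foreign candidate costs them
   little (at most 1 for VD; for MF one approved candidate can be treated as
   deleted), so an optimal axis may split a block. *)

Lemma axlt_filter (p : pred nat) ax a b : p a -> p b ->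
  axlt [seq x <- ax | p x] a b = axlt ax a b.
Proof.
move=> pa pb; rewrite /axlt; elim: ax => [|h t IH] //=.
case ph: (p h) => /=; first by case: (h == a); case: (h == b) => //=; rewrite ltnS.
have [ha hb] : h != a /\ h != b by split; apply: contraFneq ph => ->.
by rewrite (negPf ha) (negPf hb) ltnS.
Qed.

Lemma axlt_meml ax a b : axlt ax a b -> a \in ax.
Proof. by rewrite -index_mem => /leq_trans; apply; apply: index_size. Qed.

Lemma is_intervalP ax S :
  reflect (forall a b c, a \in S -> b \in S -> c \in ax ->
             axlt ax a c -> axlt ax c b -> c \in S)
          (is_interval ax S).
Proof.
apply: (iffP allP) => [H a b c aS bS cax ac cb | H a aS].
  by move/allP: (H a aS) => /(_ b bS)/allP/(_ c cax)/implyP; apply; rewrite ac.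
by apply/allP => b bS; apply/allP => c cax; apply/implyP => /andP[]; apply: H.
Qed.

Lemma is_intervalPn ax S : ~~ is_interval ax S ->
  exists a b c, [/\ a \in S, b \in S, c \in ax, c \notin S & axlt ax a c && axlt ax c b].
Proof.
case/allPn => a aS /allPn [b bS] /allPn [c cax]; rewrite negb_imply => /andP[acb cS].
by exists a, b, c.
Qed.

Lemma is_interval_eq_mem ax S1 S2 : S1 =i S2 -> is_interval ax S1 = is_interval ax S2.
Proof.
suff imp T1 T2 : T1 =i T2 -> is_interval ax T1 -> is_interval ax T2.
  by move=> eqS; apply/idP/idP; apply: imp => // y; rewrite eqS.
by move=> eqT /is_intervalP H; apply/is_intervalP => a b c; rewrite -!eqT; apply: H.
Qed.

Lemma restrict_eq_mem P S1 S2 : S1 =i S2 -> restrict P S1 = restrict P S2.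
Proof.
move=> eqS; rewrite /restrict (eq_filter (a2 := fun A => has (mem S2) A)).
  by apply: eq_map => A; apply: eq_filter => y; rewrite eqS.
by move=> A; apply: eq_has => y; rewrite /= eqS.
Qed.

Lemma scoring_rule_eq_mem cost C1 C2 P ax : uniq C1 -> uniq C2 -> C1 =i C2 ->
  scoring_rule cost C1 P ax <-> scoring_rule cost C2 P ax.
Proof.
move=> uC1 uC2 eqC; have permC : perm_eq C1 C2 by apply: uniq_perm.
have axisE t : is_axis C1 t <-> is_axis C2 t.
  by rewrite /is_axis; split=> /perm_trans; apply; rewrite // perm_sym.
by split=> -[/axisE ax_ok opt]; split=> // t /axisE; apply: opt.
Qed.

Lemma leq_sum_term (T : eqType) (r : seq T) (p : pred T) (F : T -> nat) c :
  c \in r -> p c -> F c <= \sum_(i <- r | p i) F i.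
Proof. by move=> cr pc; rewrite (big_rem c) //= pc leq_addr. Qed.

Lemma ltn_sum_seq (T : eqType) (r : seq T) (F G : T -> nat) i0 :
  {in r, forall i, F i <= G i} -> i0 \in r -> F i0 < G i0 ->
  \sum_(i <- r) F i < \sum_(i <- r) G i.
Proof.
move=> FG i0r ltFG; rewrite (big_rem i0) // [X in _ < X](big_rem i0) //=.
rewrite -addSn; apply: leq_add ltFG _; rewrite !big_seq; apply: leq_sum => i /mem_rem; exact: FG.
Qed.

Lemma is_axis_filter C S ax : uniq C -> uniq S -> {subset S <= C} -> is_axis C ax ->
  is_axis S [seq y <- ax | y \in S].
Proof.
move=> uC uS SC axC; apply: uniq_perm => //; first by apply: filter_uniq; rewrite (perm_uniq axC).
by move=> y; rewrite mem_filter (perm_mem axC) andb_idr //; apply: SC.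
Qed.

Lemma sorted_relpre_const (T : eqType) (f : T -> nat) k (s : seq T) :
  {in s, forall x, f x = k} -> sorted (relpre f leq) s.
Proof.
move=> fk; rewrite -sorted_map.
have /all_pred1P -> : all (pred1 k) (map f s) by rewrite all_map; apply/allP => x /fk /= ->.
by elim: (size _) => //= -[|n] // IH; rewrite /= leqnn.
Qed.

Lemma is_axis_splice C S ax sg : uniq C -> uniq S -> {subset S <= C} ->
  is_axis C ax -> is_axis S sg -> is_axis C (sg ++ [seq y <- ax | y \notin S]).
Proof.
move=> uC uS SC axC sgS; have uax : uniq ax by rewrite (perm_uniq axC).
apply: uniq_perm => //.
  rewrite cat_uniq filter_uniq // andbT (perm_uniq sgS) uS /=.
  by apply/hasP => -[y]; rewrite mem_filter (perm_mem sgS) => /andP[/negPf->].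
move=> y; rewrite mem_cat mem_filter (perm_mem sgS) (perm_mem axC).
by case yS: (y \in S); rewrite //= SC.
Qed.

Lemma count_predI_split (T : Type) (p q : pred T) s :
  count q s = count (predI p q) s + count (predI (predC p) q) s.
Proof. by rewrite -!count_filter count_predC size_filter. Qed.

Definition spill_point (A S ax : seq nat) (c : nat) : bool :=
  (c \notin S) && has (axlt ax ^~ c) A && has (axlt ax c) A.

Definition spills (A S ax : seq nat) : bool := has (spill_point A S ax) ax.

Definition separable_cost (cost : ballot -> seq nat -> nat) : Prop :=
  forall A S ax, {subset A <= S} -> {subset A <= ax} ->
    cost A [seq x <- ax | x \in S] + spills A S ax <= cost A ax /\
    (~~ spills A S ax -> cost A ax = cost A [seq x <- ax | x \in S]).

Lemma separable_BC : separable_cost cost_BC.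
Proof.
move=> A S ax AS _.
pose q b := (b \notin A) && has (axlt ax ^~ b) A && has (axlt ax b) A.
have restrE : cost_BC A [seq x <- ax | x \in S] = count (predI (mem S) q) ax.
  rewrite /cost_BC count_filter; apply: eq_count => b /=.
  case bS: (b \in S); rewrite ?andbF ?andbT //=; congr (_ && _ && _).
    by apply: eq_in_has => a /AS aS; rewrite /= axlt_filter.
  by apply: eq_in_has => a /AS aS; rewrite /= axlt_filter.
have spillE : spills A S ax = has (predI (predC (mem S)) q) ax.
  apply: eq_has => b; rewrite /spill_point /q /=.
  by case bS: (b \in S); rewrite //= (contraFN (AS b) bS).
change (cost_BC A ax) with (count q ax).
rewrite (count_predI_split (mem S)) restrE spillE has_count.
by split; [rewrite leq_add2l; case: count | rewrite lt0n negbK => /eqP->; rewrite addn0].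
Qed.

Section GapCost.

Variable g : nat -> nat -> nat.
Hypothesis g0n : forall n, g 0 n = 0.
Hypothesis gn0 : forall n, g n 0 = 0.
Hypothesis g_gt0 : forall m n, 0 < g m.+1 n.+1.

Definition gap_cost (A : ballot) (ax : seq nat) : nat :=
  \sum_(x <- ax | x \notin A) g (n_left A ax x) (n_right A ax x).

Lemma n_left_filter (A S ax : seq nat) x : {subset A <= S} -> x \in S ->
  n_left A [seq y <- ax | y \in S] x = n_left A ax x.
Proof.
move=> AS xS; rewrite /n_left count_filter; apply: eq_count => y /=.
case yA: (y \in A) => //=; have yS := AS y yA.
by rewrite yS andbT axlt_filter.
Qed.

Lemma n_right_filter (A S ax : seq nat) x : {subset A <= S} -> x \in S ->
  n_right A [seq y <- ax | y \in S] x = n_right A ax x.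
Proof.
move=> AS xS; rewrite /n_right count_filter; apply: eq_count => y /=.
case yA: (y \in A) => //=; have yS := AS y yA.
by rewrite yS andbT axlt_filter.
Qed.

Lemma gap_cost_split (A S ax : seq nat) : {subset A <= S} ->
  gap_cost A ax = gap_cost A [seq x <- ax | x \in S]
                + \sum_(x <- ax | spill_point A S ax x) g (n_left A ax x) (n_right A ax x).
Proof.
move=> AS; rewrite /gap_cost big_filter_cond (bigID (mem S)) /=; congr (_ + _).
  apply: eq_big => [x | x /andP[_ xS]]; first by rewrite andbC.
  by rewrite n_left_filter ?n_right_filter.
rewrite [RHS](bigID (fun x => x \notin S)) /= [X in _ = _ + X]big1 ?addn0; last first.
  by move=> x; rewrite /spill_point negbK; case: (x \in S); rewrite /= ?andbF.
rewrite [LHS](bigID (spill_point A S ax)) /= [X in _ + X = _]big1 ?addn0.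
  apply: eq_bigl => x; rewrite /spill_point andbC.
  by case xS: (x \in S); rewrite //= ?andbF // (contraFN (AS x) xS).
move=> x /andP[/andP[_ xS]]; rewrite /spill_point xS /=.
case: (posnP (n_left A ax x)) => [-> _|]; first by rewrite g0n.
rewrite /n_left -has_count => /hasP[a _ /andP[aA ax_]].
case: (posnP (n_right A ax x)) => [-> _|]; first by rewrite gn0.
rewrite /n_right -has_count => /hasP[b _ /andP[bA xb]].
by case/negP; apply/andP; split; apply/hasP; [exists a | exists b].
Qed.

Lemma separable_gap_cost : separable_cost gap_cost.
Proof.
move=> A S ax AS Aax; rewrite (gap_cost_split ax AS); split; last first.
  move=> noSpill; rewrite big_seq_cond big1 ?addn0 // => x /andP[xax spx].
  by case/hasP: noSpill; exists x.
rewrite leq_add2l /spills; case: hasP => // -[c cax spc]; apply: leq_trans (leq_sum_term _ cax spc).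
case/andP: spc => /andP[_ /hasP[a aA ac]] /hasP[b bA cb].
have left_gt0 : 0 < n_left A ax c.
  by rewrite /n_left -has_count; apply/hasP; exists a; rewrite ?aA ?(axlt_meml ac).
have right_gt0 : 0 < n_right A ax c.
  by rewrite /n_right -has_count; apply/hasP; exists b; rewrite ?bA ?Aax.
by move: left_gt0 right_gt0; case: (n_left A ax c) => // m; case: (n_right A ax c).
Qed.

End GapCost.

Lemma separable_MS : separable_cost cost_MS.
Proof. by apply: (separable_gap_cost (g := minn)) => [n|n|m n]; rewrite ?min0n ?minn0 ?leq_min. Qed.

Lemma separable_FT : separable_cost cost_FT.
Proof. by apply: (separable_gap_cost (g := muln)) => [n|n|m n]; rewrite ?muln0 ?muln_gt0. Qed.

Section CoapprovalBlocks.

Variables (C : seq nat) (P : profile).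
Hypothesis uniq_C : uniq C.
Hypothesis P_profile : is_profile C P.

Local Notation equiv := (coapp_equiv P).

Lemma coapp_equiv_trans x y z : equiv x y -> equiv y z -> equiv x z.
Proof. by move=> exy eyz; elim: eyz exy => // u v w _ IH vw exu; apply: ce_step (IH exu) vw. Qed.

Lemma coapp_equiv_sym x y : equiv x y -> equiv y x.
Proof.
elim=> [u | u v w _ evu vw]; first exact: ce_refl.
apply: (coapp_equiv_trans _ evu); apply: ce_step (ce_refl P w) _.
by apply: sub_has vw => A /andP[-> ->].
Qed.

Lemma coapp_equiv_ballot A a b : A \in P -> a \in A -> b \in A -> equiv a b.
Proof. by move=> AP aA bA; apply: ce_step (ce_refl P a) _; apply/hasP; exists A; rewrite ?aA. Qed.

Definition coapp_equivb x y : bool := excluded_middle_informative (equiv x y).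

Lemma coapp_equivP x y : reflect (equiv x y) (coapp_equivb x y).
Proof. by rewrite /coapp_equivb; case: excluded_middle_informative; constructor. Qed.

Definition block x : seq nat := [seq y <- C | coapp_equivb x y].

Lemma mem_block x y : (y \in block x) = (y \in C) && coapp_equivb x y.
Proof. by rewrite mem_filter andbC. Qed.

Lemma block_sub x : {subset block x <= C}.
Proof. by move=> y; rewrite mem_block => /andP[]. Qed.

Lemma block_equiv x y : y \in block x -> equiv x y.
Proof. by rewrite mem_block => /andP[_ /coapp_equivP]. Qed.

Lemma mem_block_equiv x y : y \in C -> equiv x y -> y \in block x.
Proof. by move=> yC /coapp_equivP exy; rewrite mem_block yC. Qed.

Lemma block_eq x y : equiv x y -> block x = block y.
Proof.
move=> exy; apply: eq_filter => z; apply/coapp_equivP/coapp_equivP => [exz | eyz].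
  exact: coapp_equiv_trans (coapp_equiv_sym exy) exz.
exact: coapp_equiv_trans exy eyz.
Qed.

Lemma block_self x y : y \in block x -> block y = block x.
Proof. by move/block_equiv/coapp_equiv_sym/block_eq. Qed.

Lemma is_block_block x : x \in C -> is_block C P (block x).
Proof.
move=> xC; split; first exact: filter_uniq uniq_C.
by exists x => // y; rewrite mem_block; split=> [/andP[-> /coapp_equivP] | [-> /coapp_equivP]].
Qed.

Lemma is_blockP S : is_block C P S -> exists2 x, x \in C & S =i block x.
Proof.
case=> _ [x xC memS]; exists x => // y; rewrite mem_block.
by apply/idP/andP => [/memS[-> /coapp_equivP] | [yC /coapp_equivP exy]] //; apply/memS.
Qed.

Definition blocks : seq (seq nat) := undup [seq block x | x <- C].

Lemma block_in_blocks x : x \in C -> block x \in blocks.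
Proof. by move=> xC; rewrite mem_undup map_f. Qed.

Lemma blocksP S : S \in blocks -> exists2 x, x \in C & S = block x.
Proof. by rewrite mem_undup => /mapP. Qed.

Lemma blocks_disjoint S1 S2 y : S1 \in blocks -> S2 \in blocks ->
  y \in S1 -> y \in S2 -> S1 = S2.
Proof.
by case/blocksP=> x1 _ -> /blocksP[x2 _ ->] /block_self <- /block_self <-.
Qed.

Definition ballot_block (A : ballot) : seq nat := block (head 0 A).

Lemma head_ballot A : A \in P -> head 0 A \in A.
Proof. by case/P_profile; case: A => // a A _ _; rewrite mem_head. Qed.

Lemma ballot_sub A : A \in P -> {subset A <= C}.
Proof. by case/P_profile. Qed.

Lemma ballot_sub_block A : A \in P -> {subset A <= ballot_block A}.
Proof.
move=> AP a aA; apply: mem_block_equiv; first exact: ballot_sub aA.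
exact: coapp_equiv_ballot (head_ballot AP) aA.
Qed.

Lemma ballot_block_in_blocks A : A \in P -> ballot_block A \in blocks.
Proof. by move=> AP; apply/block_in_blocks/(ballot_sub AP)/head_ballot. Qed.

Lemma has_block_ballot S A : S \in blocks -> A \in P -> has (mem S) A = (S == ballot_block A).
Proof.
move=> Sb AP; apply/hasP/eqP => [[a aA aS] | ->].
  exact: blocks_disjoint Sb (ballot_block_in_blocks AP) aS (ballot_sub_block AP aA).
by exists (head 0 A); rewrite /= ?(ballot_sub_block AP) ?head_ballot.
Qed.

Definition blocks_cost (cost : ballot -> seq nat -> nat) (ax : seq nat) : nat :=
  \sum_(S <- blocks) total_cost cost (restrict P S) [seq y <- ax | y \in S].

Lemma sum_cost_ballot_block cost ax :
  \sum_(A <- P) cost A [seq y <- ax | y \in ballot_block A] = blocks_cost cost ax.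
Proof.
have restrictE S : S \in blocks -> total_cost cost (restrict P S) [seq y <- ax | y \in S] =
    \sum_(A <- P) if S == ballot_block A then cost A [seq y <- ax | y \in ballot_block A] else 0.
  move=> Sb; rewrite /total_cost /restrict big_map big_filter big_mkcond.
  apply: eq_big_seq => A AP; rewrite (has_block_ballot Sb AP).
  case: eqP => // ->; congr (cost _ _); apply/all_filterP/allP.
  exact: ballot_sub_block.
rewrite /blocks_cost (eq_big_seq _ restrictE) exchange_big /=.
apply: eq_big_seq => A AP; rewrite -big_mkcond -big_filter.
by rewrite filter_pred1_uniq ?undup_uniq ?ballot_block_in_blocks // big_seq1.
Qed.

Lemma equiv_lt_or_spills ax S a c w : is_axis C ax -> S \in blocks ->
  a \in S -> c \in ax -> c \notin S -> axlt ax a c -> equiv a w ->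
  axlt ax w c \/ exists2 A, A \in P & spills A (ballot_block A) ax.
Proof.
move=> axC /blocksP[x xC ->] aS cax cS ac eaw.
elim: eaw aS ac => [u _ uc | u v z euv IH vz uS uc]; first by left.
case: (IH uS uc) => [vc|]; last by right.
case/hasP: vz => A AP /andP[vA zA].
have vS : v \in block x.
  exact: mem_block_equiv (ballot_sub AP vA) (coapp_equiv_trans (block_equiv uS) euv).
have AS : ballot_block A = block x.
  by apply/esym/eqP; rewrite -has_block_ballot ?block_in_blocks //; apply/hasP; exists v.
have zS : z \in block x by rewrite -AS ballot_sub_block.
have zax : z \in ax by rewrite (perm_mem axC) (ballot_sub AP zA).
case: (ltngtP (index z ax) (index c ax)) => [zc | cz | /(index_inj 0 zax cax) zc]; first by left.
  right; exists A => //; apply/hasP; exists c => //.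
  by rewrite /spill_point AS cS; apply/andP; split; apply/hasP; [exists v | exists z].
by rewrite -zc zS in cS.
Qed.

Lemma not_interval_spills ax S : is_axis C ax -> S \in blocks -> ~~ is_interval ax S ->
  exists2 A, A \in P & spills A (ballot_block A) ax.
Proof.
move=> axC Sb /is_intervalPn[a [b [c [aS bS cax cS /andP[ac cb]]]]].
have eab : equiv a b.
  case/blocksP: (Sb) aS bS => x _ -> /block_equiv exa /block_equiv exb.
  exact: coapp_equiv_trans (coapp_equiv_sym exa) exb.
case: (equiv_lt_or_spills axC Sb aS cax cS ac eab) => // bc.
by move: bc cb; rewrite /axlt => /ltn_trans lt_bb /lt_bb; rewrite ltnn.
Qed.

Definition block_key x : nat := index (block x) blocks.

Definition block_sort (ax : seq nat) : seq nat := sort (relpre block_key leq) ax.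

Lemma block_key_total : total (relpre block_key leq).
Proof. by move=> x y; apply: leq_total. Qed.

Lemma block_key_trans : transitive (relpre block_key leq).
Proof. by move=> x y z; apply: leq_trans. Qed.

Lemma block_sort_axis ax : is_axis C ax -> is_axis C (block_sort ax).
Proof. by rewrite /is_axis /block_sort perm_sort. Qed.

Lemma filter_block_sort ax S : S \in blocks ->
  [seq y <- block_sort ax | y \in S] = [seq y <- ax | y \in S].
Proof.
(* [sort] is stable and all members of [S] have the same key. *)
move=> Sb; rewrite /block_sort filter_sort; [|exact: block_key_total|exact: block_key_trans].
apply: sorted_sort; first exact: block_key_trans.
apply: (sorted_relpre_const (k := index S blocks)) => y; rewrite mem_filter => /andP[yS _].
by case/blocksP: Sb yS => x _ -> /block_self; rewrite /block_key => ->.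
Qed.

Lemma is_interval_block_sort ax S : is_axis C ax -> S \in blocks -> is_interval (block_sort ax) S.
Proof.
move=> axC Sb; apply/is_intervalP => a b c aS bS cax ac cb.
case/blocksP: Sb aS bS => x xC -> aS bS.
have sorted_ax : sorted (relpre block_key leq) (block_sort ax).
  exact: sort_sorted block_key_total _.
have key_le := sorted_ltn_index block_key_trans sorted_ax.
have memC y : (y \in block_sort ax) = (y \in C) by apply: perm_mem; apply: block_sort_axis.
have cC : c \in C by rewrite -memC.
have [aax bax] : a \in block_sort ax /\ b \in block_sort ax.
  by rewrite !memC (block_sub aS) (block_sub bS).
have /= := key_le a c aax cax ac; have /= := key_le c b cax bax cb.
rewrite /block_key (block_self aS) (block_self bS) => cx xc.
suff <- : block c = block x by apply: mem_block_equiv cC (ce_refl P c).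
apply: (index_inj [::] (block_in_blocks cC) (block_in_blocks xC)).
by apply/eqP; rewrite eqn_leq cx xc.
Qed.

Lemma block_uniq x : uniq (block x).
Proof. exact: filter_uniq. Qed.

Lemma blocks_sub S : S \in blocks -> {subset S <= C}.
Proof. by case/blocksP=> x _ ->; apply: block_sub. Qed.

Lemma blocks_uniq S : S \in blocks -> uniq S.
Proof. by case/blocksP=> x _ ->; apply: block_uniq. Qed.

Lemma filter_splice_blocks ax S T sg : S \in blocks -> T \in blocks -> is_axis S sg ->
  [seq y <- sg ++ [seq y <- ax | y \notin S] | y \in T] =
  if T == S then sg else [seq y <- ax | y \in T].
Proof.
move=> Sb Tb sgS; rewrite filter_cat -filter_predI.
case: (eqVneq T S) => [-> | neqTS].
  rewrite [X in _ ++ X](eq_filter (a2 := pred0)) ?filter_pred0 ?cats0 => [|y /=];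
    last by case: (y \in S).
  by apply/all_filterP/allP => y; rewrite (perm_mem sgS).
have notST y : y \in T -> y \in S -> False.
  by move=> yT yS; move: neqTS; rewrite (blocks_disjoint Tb Sb yT yS) eqxx.
rewrite (@eq_in_filter _ _ pred0 sg) ?filter_pred0 /= => [|y]; last first.
  by rewrite (perm_mem sgS) => yS; apply/negP => /notST.
apply: eq_filter => y /=; case yT: (y \in T); rewrite //=.
by apply/negP => /(notST _ yT).
Qed.

Section SeparableCost.

Variable cost : ballot -> seq nat -> nat.
Hypothesis cost_sep : separable_cost cost.

Lemma ballot_sub_axis A ax : A \in P -> is_axis C ax -> {subset A <= ax}.
Proof. by move=> AP axC a /(ballot_sub AP); rewrite (perm_mem axC). Qed.

Lemma blocks_cost_spills_le ax : is_axis C ax ->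
  blocks_cost cost ax + \sum_(A <- P) spills A (ballot_block A) ax <= total_cost cost P ax.
Proof.
move=> axC; rewrite -sum_cost_ballot_block -big_split /total_cost !big_seq.
apply: leq_sum => A AP.
by case: (cost_sep (ballot_sub_block AP) (ballot_sub_axis AP axC)).
Qed.

Lemma total_cost_blocks ax : is_axis C ax -> {in blocks, forall S, is_interval ax S} ->
  total_cost cost P ax = blocks_cost cost ax.
Proof.
move=> axC blocks_int; rewrite -sum_cost_ballot_block /total_cost !big_seq.
apply: eq_bigr => A AP.
case: (cost_sep (ballot_sub_block AP) (ballot_sub_axis AP axC)) => _; apply.
apply/hasP => -[c cax /andP[/andP[cS /hasP[a aA ac]] /hasP[b bA cb]]].
have /is_intervalP A_int := blocks_int _ (ballot_block_in_blocks AP).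
have aS := ballot_sub_block AP aA; have bS := ballot_sub_block AP bA.
by rewrite (A_int a b c) in cS.
Qed.

Lemma total_cost_block_sort ax : is_axis C ax ->
  total_cost cost P (block_sort ax) = blocks_cost cost ax.
Proof.
move=> axC; rewrite total_cost_blocks.
- by apply: eq_big_seq => S Sb; rewrite filter_block_sort.
- exact: block_sort_axis.
- by move=> S; apply: is_interval_block_sort.
Qed.

Lemma optimal_blocks_interval ax S : scoring_rule cost C P ax -> S \in blocks -> is_interval ax S.
Proof.
case=> axC opt Sb; apply: contraT => notint.
have [A AP spA] := not_interval_spills axC Sb notint.
have spills_gt0 : 0 < \sum_(A <- P) spills A (ballot_block A) ax.
  by apply: leq_trans (leq_sum_term _ AP (erefl true)); rewrite spA.
have := opt _ (block_sort_axis axC); rewrite total_cost_block_sort //.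
by have := blocks_cost_spills_le axC; lia.
Qed.

Lemma optimal_restrict_optimal ax S : scoring_rule cost C P ax -> S \in blocks ->
  scoring_rule cost S (restrict P S) [seq y <- ax | y \in S].
Proof.
move=> ax_opt Sb; have [axC opt] := ax_opt.
have [uS SC] := (blocks_uniq Sb, blocks_sub Sb).
split=> [|sg sgS]; first exact: is_axis_filter uniq_C uS SC axC.
rewrite leqNgt; apply/negP => better.
pose L := sg ++ [seq y <- ax | y \notin S].
have LC : is_axis C L by apply: is_axis_splice uniq_C uS SC axC sgS.
have : blocks_cost cost L < blocks_cost cost ax.
  apply: (ltn_sum_seq (i0 := S)) => // [T Tb|]; rewrite filter_splice_blocks ?eqxx //.
  by case: eqP => [-> | _]; first exact: ltnW.
have := opt _ (block_sort_axis LC); rewrite total_cost_block_sort //.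
rewrite total_cost_blocks // => [|T]; last exact: optimal_blocks_interval.
by move=> /leq_ltn_trans H /H; rewrite ltnn.
Qed.

Lemma optimal_of_blocks ax : is_axis C ax ->
  (forall S, S \in blocks ->
     is_interval ax S /\ scoring_rule cost S (restrict P S) [seq y <- ax | y \in S]) ->
  scoring_rule cost C P ax.
Proof.
move=> axC blocks_opt; split=> // ax' ax'C.
rewrite total_cost_blocks // => [|S /blocks_opt[]//].
apply: leq_trans (leq_trans (leq_addr _ _) (blocks_cost_spills_le ax'C)).
rewrite /blocks_cost !big_seq; apply: leq_sum => S Sb.
have [_ [_ S_opt]] := blocks_opt S Sb; apply: S_opt.
exact: is_axis_filter uniq_C (blocks_uniq Sb) (blocks_sub Sb) ax'C.
Qed.

Lemma scoring_pc_equiv ax : is_axis C ax -> pc_equiv (scoring_rule cost) C P ax.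
Proof.
move=> axC; split=> [ax_opt S Sblock | blocks_opt]; last first.
  apply: optimal_of_blocks => // S /blocksP[x xC ->].
  exact/blocks_opt/is_block_block.
have [x xC Sx] := is_blockP Sblock.
rewrite (is_interval_eq_mem _ Sx) (restrict_eq_mem _ Sx) (eq_filter (a2 := mem (block x))) //.
split; first exact: optimal_blocks_interval (block_in_blocks xC).
apply/(scoring_rule_eq_mem _ _ _ Sblock.1 (block_uniq x) Sx).
exact: optimal_restrict_optimal (block_in_blocks xC).
Qed.

End SeparableCost.

End CoapprovalBlocks.

Theorem scoring_partition_consistent cost :
  separable_cost cost -> partition_consistent (scoring_rule cost).
Proof. by move=> cost_sep C P ax uC PC; apply: scoring_pc_equiv. Qed.

Lemma coapp_equiv_path P x s : path (coapproved P) x s -> coapp_equiv P x (last x s).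
Proof.
have extend w y : coapp_equiv P w y -> path (coapproved P) y s -> coapp_equiv P w (last y s).
  by elim: s y => //= z s IH y wy /andP[yz zs]; apply: IH (ce_step wy yz) zs.
by move=> xs; apply: extend (ce_refl P x) xs.
Qed.

Lemma coapp_equiv_closed (P : profile) (S : seq nat) x y :
  all (fun A => all (mem S) A) P -> x \in S -> coapp_equiv P x y -> y \in S.
Proof.
move=> /allP PS xS xy; elim: xy xS => // u v w _ _ /hasP[A AP /andP[_ wA]] _.
by move/allP: (PS A AP); apply.
Qed.

Lemma is_block_closed (C : seq nat) (P : profile) (S : seq nat) x :
  uniq S -> all (mem C) S -> x \in S -> {in S, forall y, coapp_equiv P x y} ->
  all (fun A => all (mem S) A) P -> is_block C P S.
Proof.
move=> uS /allP SC xS S_reach PS; split=> //; exists x; first exact: SC.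
move=> y; split=> [yS | [_ xy]]; first by split; [apply: SC | apply: S_reach].
exact: coapp_equiv_closed PS xS xy.
Qed.

Lemma is_profile_all (C : seq nat) (P : profile) :
  all (fun A => (A != [::]) && all (mem C) A) P -> is_profile C P.
Proof. by move=> /allP PC A /PC /andP[A0 /allP AC]. Qed.

Lemma scoring_rule_permutations cost C P ax : perm_eq ax C ->
  all (fun ax' => sumn [seq cost A ax | A <- P] <= sumn [seq cost A ax' | A <- P])
      (permutations C) ->
  scoring_rule cost C P ax.
Proof.
move=> axC /allP opt; split=> // ax' ax'C.
by have := opt ax'; rewrite mem_permutations !sumnE !big_map; apply.
Qed.

Lemma split_block_not_pc_equiv (f : rule) C P ax S :
  f C P ax -> is_block C P S -> ~~ is_interval ax S -> ~ pc_equiv f C P ax.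
Proof. by move=> fax Sblock /negP S_split [/(_ fax S Sblock)[]]. Qed.

(* Candidate 4 splits the block {0,1,2,3}; only the ballot [1;3;2] stops
   being an interval, and VD charges it 1, which is unavoidable anyway. *)
Lemma VD_split_block_example :
  exists (C : seq nat) (P : profile) (ax : seq nat),
    uniq C /\ is_profile C P /\ is_axis C ax /\ ~ pc_equiv VD C P ax.
Proof.
exists [:: 0; 1; 2; 3; 4], [:: [:: 0; 2]; [:: 0; 1]; [:: 1; 3; 2]; [:: 1; 2; 0]],
  [:: 1; 0; 2; 4; 3].
split=> //; split; [by apply: is_profile_all | split=> //].
apply: (@split_block_not_pc_equiv _ _ _ _ [:: 0; 1; 2; 3]) => //.
  by apply: scoring_rule_permutations; vm_compute.
apply: (@is_block_closed _ _ _ 0) => // y; rewrite !inE => /or4P[] /eqP->.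
- by apply: (@coapp_equiv_path _ 0 [::]).
- by apply: (@coapp_equiv_path _ 0 [:: 1]).
- by apply: (@coapp_equiv_path _ 0 [:: 2]).
- by apply: (@coapp_equiv_path _ 0 [:: 1; 3]).
Qed.

(* Candidate 4 separates 1 from the rest of the block {0,1,2,3}; MF charges
   the ballot [1;2] only 1 for dropping 1, which is unavoidable anyway. *)
Lemma MF_split_block_example :
  exists (C : seq nat) (P : profile) (ax : seq nat),
    uniq C /\ is_profile C P /\ is_axis C ax /\ ~ pc_equiv MF C P ax.
Proof.
exists [:: 0; 1; 2; 3; 4], [:: [:: 1; 2]; [:: 3; 2]; [:: 0; 3; 2]; [:: 2; 0]],
  [:: 0; 2; 3; 4; 1].
split=> //; split; [by apply: is_profile_all | split=> //].
apply: (@split_block_not_pc_equiv _ _ _ _ [:: 0; 1; 2; 3]) => //.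
  by apply: scoring_rule_permutations; vm_compute.
apply: (@is_block_closed _ _ _ 0) => // y; rewrite !inE => /or4P[] /eqP->.
- by apply: (@coapp_equiv_path _ 0 [::]).
- by apply: (@coapp_equiv_path _ 0 [:: 2; 1]).
- by apply: (@coapp_equiv_path _ 0 [:: 2]).
- by apply: (@coapp_equiv_path _ 0 [:: 3]).
Qed.

Theorem mainTheorem19 :
  partition_consistent BC /\ partition_consistent MS /\ partition_consistent FT /\
  (exists (C : seq nat) (P : profile) (ax : seq nat),
     uniq C /\ is_profile C P /\ is_axis C ax /\ ~ pc_equiv VD C P ax) /\
  (exists (C : seq nat) (P : profile) (ax : seq nat),
     uniq C /\ is_profile C P /\ is_axis C ax /\ ~ pc_equiv MF C P ax).
Proof.
split; first exact: scoring_partition_consistent separable_BC.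
split; first exact: scoring_partition_consistent separable_MS.
split; first exact: scoring_partition_consistent separable_FT.
by split; [exact: VD_split_block_example | exact: MF_split_block_example].
Qed.
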